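(* Let $n$ be an odd integer. If the cycle $C_n$ admits an optimal extended irregular dominating set, then the cycle $C_{2n}$ also admits an optimal extended irregular dominating set.
   Context: $C_m$ is the cycle on $m$ vertices. In a finite simple graph $\Gamma=(V,E)$ with distance $d$, a vertex $v$ carrying a non-negative integer label $\ell$ dominates (covers) exactly the vertices $u$ with $d(u,v)=\ell$; a vertex labeled $0$ dominates only itself. For $k\ge0$, a $k$-extended irregular dominating set is a set $S\subseteq V$ of $k$ vertices with a labeling $\lambda:S\to\mathbb{Z}_{\ge0}$ with distinct labels, such that every vertex of $V$ is dominated by some vertex of $S$; it is assumed that some vertex of $S$ has label $0$. $\gamma_e(\Gamma)$ is the minimum cardinality of such a set; a $k$-extended irregular dominating set is optimal if $k=\gamma_e(\Gamma)$. *)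

From mathcomp Require Import all_boot.
Set Implicit Arguments. Unset Strict Implicit. Unset Printing Implicit Defensive.

Definition gdist (T : finType) (e : rel T) (u v : T) (d : nat) : Prop :=
  (exists p : seq T, [&& path e v p, last v p == u & size p == d]) /\
  (forall p : seq T, path e v p -> last v p = u -> d <= size p).

Definition dominates (T : finType) (e : rel T) (v : T) (l : nat) (u : T) : Prop :=
  gdist e u v l.

Definition ext_irr_dom (T : finType) (e : rel T) (S : {set T}) (lam : T -> nat) : Prop :=
  [/\ {in S &, injective lam},
      (exists2 v, v \in S & lam v = 0) &
      (forall u : T, exists2 v, v \in S & dominates e v (lam v) u)].

Definition optimal_eids (T : finType) (e : rel T) (S : {set T}) (lam : T -> nat) : Prop :=
  ext_irr_dom e S lam /\
  (forall (S' : {set T}) (lam' : T -> nat), ext_irr_dom e S' lam' -> #|S| <= #|S'|).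

Definition admits_optimal_eids (T : finType) (e : rel T) : Prop :=
  exists (S : {set T}) (lam : T -> nat), optimal_eids e S lam.

(* The cycle C_m on vertex set 'I_m (a cycle for m >= 3): i ~ j iff j = i+1 mod m
   or i = j+1 mod m. *)
Definition cycle_rel (m : nat) : rel 'I_m :=
  fun i j => (val j == (val i).+1 %% m) || (val i == (val j).+1 %% m).
Arguments cycle_rel m : clear implicits.

From mathcomp Require Import all_boot zify.
From mathcomp Require Import boolp.

(* Since n is odd, a vertex y of C_(2n) is determined by y mod n and the
   parity of y, and d(y, u) = r in C_(2n) iff r <= n, y = u +- r (mod n) and
   y + r, u have the same parity.  Let (S, lam) be an extended irregular
   dominating set of C_n.  Only the active vertices, those with 2 lam v <= n,
   dominate anything; there are at most (n+1)/2 of them, so some residue s is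
   not 2v mod n for any of them.  Each active v yields two vertices of C_(2n):
   its copy, over v, with label lam v or n - lam v, and its mirror, over s - v,
   with the complementary label, parities being chosen so that each label has
   the parity of the copy.  The copies dominate the even vertices over the
   vertices v dominates, the mirrors the odd vertices over their reflections
   x |-> s - x; all labels are distinct because n is odd and the labels
   lam v < n/2 are.  An optimal set is then one of least cardinality. *)

Set Implicit Arguments.
Unset Strict Implicit.
Unset Printing Implicit Defensive.

Definition pm_shift (m c r u : nat) : Prop :=
  c + r = u %[mod m] \/ u + r = c %[mod m].

Section PmShift.

Variable m : nat.

Lemma pm_shift_eqmod c c' r r' u u' :
  c = c' %[mod m] -> r = r' %[mod m] -> u = u' %[mod m] ->
  pm_shift m c r u -> pm_shift m c' r' u'.
Proof.
by move=> ec er eu [h | h]; [left | right];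
  rewrite -modnDm -?ec -?er -?eu modnDm h.
Qed.

Lemma pm_shift_compl c r u :
  r <= m -> pm_shift m c r u -> pm_shift m c (m - r) u.
Proof.
move=> rm [h | h]; [right | left];
  by rewrite -modnDml -h modnDml -addnA subnKC // modnDr.
Qed.

Lemma pm_shift_reflect s c c' r u u' :
  c + c' = s %[mod m] -> u + u' = s %[mod m] ->
  pm_shift m c r u -> pm_shift m c' r u'.
Proof.
move=> hc hu [h | h]; [right | left]; apply/eqP.
- by rewrite -(eqn_modDl c) addnCA -modnDmr h modnDmr addnC hu hc.
- by rewrite -(eqn_modDl u) addnCA -modnDmr h modnDmr addnC hc hu.
Qed.

Lemma pm_shift_of_eqmod c a x b :
  c + a = x + b %[mod m] -> exists2 j, j <= a + b & pm_shift m c j x.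
Proof.
move=> h; case: (leqP b a) => ba.
- exists (a - b); first by lia.
  by left; apply/eqP; rewrite -(eqn_modDr b) -addnA subnK // h.
- exists (b - a); first by lia.
  by right; apply/eqP; rewrite -(eqn_modDr a) -addnA subnK ?(ltnW ba) // h.
Qed.

Lemma pm_shift_trans c a y b x :
  pm_shift m c a y -> pm_shift m y b x ->
  exists2 j, j <= a + b & pm_shift m c j x.
Proof.
case=> h1 [] h2.
- by exists (a + b) => //; left; rewrite addnA -modnDml h1 modnDml h2.
- by apply: pm_shift_of_eqmod; rewrite h1 h2.
- rewrite addnC; apply: pm_shift_of_eqmod.
  by rewrite -modnDml -h1 -[in RHS]modnDml -h2 !modnDml addnAC.
- exists (a + b) => //; right.
  by rewrite [a + b]addnC addnA -modnDml h2 modnDml h1.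
Qed.

Lemma pm_shift_small c j u :
  0 < m -> pm_shift m c j u ->
  exists a, [/\ a <= j, 2 * a <= m & pm_shift m c a u].
Proof.
move=> m_gt0 cj; have {}cj : pm_shift m c (j %% m) u.
  by apply: (pm_shift_eqmod _ _ _ cj); rewrite ?modn_mod.
have jm : j %% m < m := ltn_pmod j m_gt0.
have jj : j %% m <= j := leq_mod j m.
case: (leqP (2 * (j %% m)) m) => hj; first by exists (j %% m).
exists (m - j %% m); split; [lia | lia | exact: pm_shift_compl (ltnW jm) cj].
Qed.

Lemma pm_shift_uniq c a b u :
  0 < m -> 2 * a <= m -> 2 * b <= m ->
  pm_shift m c a u -> pm_shift m c b u -> a = b.
Proof.
move=> m_gt0 am bm.
have same x : x + a = x + b %[mod m] -> a = b.
  by move/eqP; rewrite eqn_modDl !modn_small // => [/eqP||]; lia.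
have opp x y : x + a = y %[mod m] -> y + b = x %[mod m] -> a = b.
  move=> h1 h2; have : x + (a + b) = x + 0 %[mod m].
    by rewrite addnA -modnDml h1 modnDml h2 addn0.
  move/eqP; rewrite eqn_modDl mod0n; case: (ltnP (a + b) m) => [lt | ge].
    by rewrite modn_small // => /eqP; lia.
  by move=> _; lia.
case=> [h1 | h1] [h2 | h2].
- by apply: (same c); rewrite h1 h2.
- exact: opp h1 h2.
- exact: opp h1 h2.
- by apply: (same u); rewrite h1 h2.
Qed.

Lemma pm_shift_compl_or c r r' u :
  r <= m -> r' = r \/ r' = m - r -> pm_shift m c r u -> pm_shift m c r' u.
Proof. by move=> rm [-> | ->] // /(pm_shift_compl rm). Qed.

End PmShift.

Lemma eqmod_double n x y :
  odd n -> odd x = odd y -> x = y %[mod n] -> x = y %[mod 2 * n].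
Proof.
move=> n_odd xy /eqP exy; apply/eqP.
by rewrite chinese_remainder ?coprime2n // !modn2 xy eqxx exy.
Qed.

Lemma pm_shift_double n c r u :
  odd n -> odd (c + r) = odd u -> pm_shift n c r u -> pm_shift (2 * n) c r u.
Proof.
move=> n_odd par [h | h]; [left | right]; apply: eqmod_double => //.
by rewrite !oddD -par oddD addbK.
Qed.

Lemma cycle_rel_pm_shift m (x y : 'I_m) : cycle_rel m x y -> pm_shift m x 1 y.
Proof.
by case/orP => /eqP e; [left | right]; rewrite addn1 -e modn_small.
Qed.

Lemma path_pm_shift m (c : 'I_m) p :
  path (cycle_rel m) c p -> exists2 j, j <= size p & pm_shift m c j (last c p).
Proof.
elim: p c => [|x p IHp] c /=; first by exists 0 => //; left; rewrite addn0.
case/andP => /cycle_rel_pm_shift cx /IHp [j jp xj].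
have [k kj ck] := pm_shift_trans cx xj.
by exists k => //; apply: leq_trans kj _.
Qed.

Lemma iter_ordS m (c : 'I_m) r : iter r (@ordS m) c = (c + r) %% m :> nat.
Proof.
elim: r => [|r IHr] /=; first by rewrite addn0 modn_small.
by rewrite IHr -addn1 modnDml addn1 addnS.
Qed.

Lemma iter_ord_predK m (c : 'I_m) r :
  iter r (@ordS m) (iter r (@ord_pred m) c) = c.
Proof. by elim: r => // r IHr; rewrite iterSr iterS ord_predK. Qed.

Lemma traject_walk m (f : 'I_m -> 'I_m) (c : 'I_m) r :
  (forall x, cycle_rel m x (f x)) ->
  let p := traject f (f c) r in
  [/\ path (cycle_rel m) c p, last c p = iter r f c & size p = r].
Proof.
move=> fP; split; [|exact: last_traject | exact: size_traject].
by elim: r c => //= r IHr c; rewrite fP IHr.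
Qed.

Lemma pm_shift_walk m (c u : 'I_m) r : pm_shift m c r u ->
  exists p, [/\ path (cycle_rel m) c p, last c p = u & size p = r].
Proof.
case=> h.
- have succP x : cycle_rel m x (ordS x) by rewrite /cycle_rel eqxx.
  have [cp lp sp] := traject_walk c r succP.
  exists (traject (@ordS m) (ordS c) r); split=> //; apply: ord_inj.
  by rewrite lp iter_ordS h modn_small.
- have predP x : cycle_rel m x (ord_pred x).
    by apply/orP; right; rewrite -[in X in X == _](ord_predK x).
  have [cp lp sp] := traject_walk c r predP.
  exists (traject (@ord_pred m) (ord_pred c) r); split=> //; apply: ord_inj.
  rewrite lp; set w := iter r _ c.
  have wc : w + r = c %[mod m].
    by rewrite -[in RHS](iter_ord_predK c r) iter_ordS modn_mod.
  move: (etrans wc (esym h)) => /eqP.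
  by rewrite eqn_modDr !modn_small // => /eqP.
Qed.

Lemma gdist_cycle m (u c : 'I_m) r :
  gdist (cycle_rel m) u c r <-> 2 * r <= m /\ pm_shift m c r u.
Proof.
have m_gt0 : 0 < m by apply: leq_ltn_trans (ltn_ord c).
have path_small p : path (cycle_rel m) c p -> last c p = u ->
    exists a, [/\ a <= size p, 2 * a <= m & pm_shift m c a u].
  move=> cp <-; have [j jp cj] := path_pm_shift cp.
  have [a [aj am ca]] := pm_shift_small m_gt0 cj.
  by exists a; split=> //; apply: leq_trans jp.
split.
- case=> -[p /and3P [cp /eqP pu /eqP <-]] pmin.
  have [a [ap am ca]] := path_small p cp pu.
  have [q [cq qu qa]] := pm_shift_walk ca.
  suff -> : size p = a by [].
  by apply/eqP; rewrite eqn_leq ap -qa pmin.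
- case=> rm cr; split.
    have [q [cq qu qr]] := pm_shift_walk cr.
    by exists q; rewrite cq qu qr !eqxx.
  move=> p cp pu; have [a [ap am ca]] := path_small p cp pu.
  by rewrite (pm_shift_uniq m_gt0 rm am cr ca).
Qed.

Lemma admits_optimal_eids_of (T : finType) (e : rel T) S (lam : T -> nat) :
  ext_irr_dom e S lam -> admits_optimal_eids e.
Proof.
move=> eidsS.
pose P k :=
  `[< exists S' (lam' : T -> nat), ext_irr_dom e S' lam' /\ #|S'| = k >].
have : exists k, P k by exists #|S|; apply/asboolP; exists S, lam.
case/ex_minnP => k /asboolP [S' [lam' [eidsS' <-]]] kmin.
exists S', lam'; split=> // S'' lam'' eidsS''.
by apply: kmin; apply/asboolP; exists S'', lam''.
Qed.

Section Doubling.

Variables (n : nat) (S : {set 'I_n}) (lam : 'I_n -> nat).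
Hypothesis n_odd : odd n.
Hypothesis eidsS : ext_irr_dom (cycle_rel n) S lam.

Let n_gt0 : 0 < n := odd_gt0 n_odd.

Definition active : {set 'I_n} := [set v in S | 2 * lam v <= n].

Lemma activeP v : v \in active -> v \in S /\ 2 * lam v < n.
Proof.
rewrite inE => /andP [vS vn]; split=> //; rewrite ltn_neqAle vn andbT.
by apply: contraTneq n_odd => <-; rewrite oddM.
Qed.

Lemma dominates_active v x : v \in S ->
  dominates (cycle_rel n) v (lam v) x -> v \in active /\ pm_shift n v (lam v) x.
Proof. by move=> vS /gdist_cycle [vn vx]; rewrite inE vS vn. Qed.

Lemma exists_non_double :
  3 <= n -> exists s : 'I_n, {in active, forall v : 'I_n, v + v != s %[mod n]}.
Proof.
move=> n_ge3; have [lam_inj _ _] := eidsS.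
have card_active : #|active| <= n./2.+1.
  rewrite cardE -(size_map lam) -(size_iota 0 n./2.+1).
  apply: uniq_leq_size.
    rewrite map_inj_in_uniq ?enum_uniq // => v w.
    by rewrite !mem_enum => /activeP [vS _] /activeP [wS _]; apply: lam_inj.
  move=> x /mapP [v]; rewrite mem_enum => /activeP [_ vn] ->.
  by rewrite mem_iota leq0n add0n ltnS geq_half_double -mul2n ltnW.
pose double (v : 'I_n) : 'I_n := Ordinal (ltn_pmod (v + v) n_gt0).
have : 0 < #|~: (double @: active)|.
  have img_small : #|double @: active| < n.
    apply: leq_ltn_trans (leq_imset_card double active) _.
    apply: leq_ltn_trans card_active _.
    by have := odd_halfK n_odd; rewrite -mul2n; lia.
  by have := cardsC (double @: active); rewrite card_ord; lia.
case/card_gt0P => s; rewrite inE => s_new; exists s => v va.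
apply: contra s_new => /eqP vs; apply/imsetP; exists v => //.
by apply: val_inj; rewrite /= vs modn_small.
Qed.

Definition ord_mod (y : nat) : 'I_n := Ordinal (ltn_pmod y n_gt0).

Lemma ord_mod_eqmod y : ord_mod y = y %[mod n].
Proof. exact: modn_mod. Qed.

Fact crt_lift_subproof (e : bool) (x : 'I_n) :
  (if odd x == e then x : nat else x + n) < 2 * n.
Proof. by have := ltn_ord x; case: ifP; lia. Qed.

Definition crt_lift (e : bool) (x : 'I_n) : 'I_(2 * n) :=
  Ordinal (crt_lift_subproof e x).

Lemma crt_lift_eqmod e x : crt_lift e x = x %[mod n].
Proof. by rewrite /=; case: ifP => // _; rewrite modnDr. Qed.

Lemma crt_lift_odd e x : odd (crt_lift e x) = e.
Proof.
rewrite /=; case: ifP => [/eqP // | ].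
by rewrite oddD n_odd; case: (odd x); case: e.
Qed.

Lemma ord_mod_crt_lift e x : ord_mod (crt_lift e x) = x.
Proof. by apply: val_inj; rewrite /= crt_lift_eqmod modn_small. Qed.

Lemma dominates_crt_lift e (x : 'I_n) (u : 'I_(2 * n)) r :
  r <= n -> e (+) odd r = odd u -> pm_shift n x r (ord_mod u) ->
  dominates (cycle_rel (2 * n)) (crt_lift e x) r u.
Proof.
move=> rn par xu; apply/gdist_cycle; split; first by lia.
apply: pm_shift_double n_odd _ _; first by rewrite oddD crt_lift_odd.
by apply: pm_shift_eqmod xu; rewrite ?crt_lift_eqmod ?ord_mod_eqmod.
Qed.

Section Mirror.

Variable s : nat.
Hypothesis s_not_double : {in active, forall v : 'I_n, v + v != s %[mod n]}.

Definition partner (v : 'I_n) : 'I_n := ord_mod (s + n - v).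

Lemma partner_sum (v : 'I_n) : partner v + v = s %[mod n].
Proof. by rewrite modnDml subnK ?modnDr //; have := ltn_ord v; lia. Qed.

Lemma partner_eq (v w : 'I_n) : w + v = s %[mod n] -> w = partner v.
Proof.
rewrite -(partner_sum v) => /eqP; rewrite eqn_modDr !modn_small // => /eqP.
exact: ord_inj.
Qed.

Lemma partnerK : involutive partner.
Proof. by move=> v; apply/esym/partner_eq; rewrite addnC partner_sum. Qed.

(* Of two active partners v <> partner v, exactly one gets parity true, so no
   copy of one coincides with the mirror of the other. *)
Definition lift_parity (v : 'I_n) : bool :=
  (partner v \in active) && (partner v < v).

Lemma eps_partner v :
  v \in active -> partner v \in active ->
  lift_parity (partner v) = ~~ lift_parity v.
Proof.
move=> va pa; rewrite /lift_parity partnerK va pa /=.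
have pv_ne : partner v != v :> nat.
  by apply: contraTneq (s_not_double va) => pv; rewrite -{1}pv partner_sum eqxx.
by case: ltngtP pv_ne => // ->; rewrite eqxx.
Qed.

Definition copy_label (v : 'I_n) : nat :=
  if odd (lam v) == lift_parity v then lam v else n - lam v.

Lemma copy_label_cases v : copy_label v = lam v \/ copy_label v = n - lam v.
Proof. by rewrite /copy_label; case: ifP; [left | right]. Qed.

Lemma copy_label_le v : lam v <= n -> copy_label v <= n.
Proof. by rewrite /copy_label; case: ifP => _ vn; [| exact: leq_subr]. Qed.

Lemma copy_label_odd v : lam v <= n -> odd (copy_label v) = lift_parity v.
Proof.
rewrite /copy_label; case: ifP => [/eqP // | ]; move=> h vn.
by rewrite oddB // n_odd; move: h; case: (odd _); case: (lift_parity v).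
Qed.

Definition copy (v : 'I_n) : 'I_(2 * n) := crt_lift (lift_parity v) v.
Definition mirror (v : 'I_n) : 'I_(2 * n) :=
  crt_lift (lift_parity v) (partner v).

Definition S2 : {set 'I_(2 * n)} := copy @: active :|: mirror @: active.

(* The values off S2 are irrelevant; on S2 the test recognises the copies. *)
Definition label2 (y : 'I_(2 * n)) : nat :=
  let x := ord_mod y in
  if (x \in active) && (odd y == lift_parity x) then copy_label x
  else n - copy_label (partner x).

Lemma label2_copy v : v \in active -> label2 (copy v) = copy_label v.
Proof. by move=> va; rewrite /label2 ord_mod_crt_lift crt_lift_odd va eqxx. Qed.

Lemma label2_mirror v : v \in active -> label2 (mirror v) = n - copy_label v.
Proof.
move=> va; rewrite /label2 ord_mod_crt_lift crt_lift_odd partnerK.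
case pa: (partner v \in active) => //=.
by rewrite eps_partner //; case: (lift_parity v).
Qed.

Lemma S2P y : y \in S2 -> exists2 v, v \in active &
    (y = copy v /\ label2 y = copy_label v) \/
    (y = mirror v /\ label2 y = n - copy_label v).
Proof.
case/setUP => /imsetP [v va ->]; exists v => //.
  by left; rewrite label2_copy.
by right; rewrite label2_mirror.
Qed.

Lemma label2_inj : {in S2 &, injective label2}.
Proof.
move=> y1 y2 /S2P [v1 v1a h1] /S2P [v2 v2a h2] e.
have [[v1S v1n] [v2S v2n]] := (activeP v1a, activeP v2a).
have lam_eq : lam v1 = lam v2.
  have := copy_label_cases v1; have := copy_label_cases v2.
  by case: h1 => -[_ l1]; case: h2 => -[_ l2]; lia.
have [lam_inj _ _] := eidsS; have ev := lam_inj _ _ v1S v2S lam_eq; subst v2.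
have copy_label_half : copy_label v1 + copy_label v1 != n.
  by apply: contraTneq n_odd => <-; rewrite addnn odd_double.
have := copy_label_cases v1.
by move: e; case: h1 => -[-> ->]; case: h2 => -[-> ->] //; lia.
Qed.

Lemma S2_label0 : exists2 y, y \in S2 & label2 y = 0.
Proof.
have [_ [v vS v0] _] := eidsS.
have va : v \in active by rewrite inE vS v0.
case: (copy_label_cases v) => r; rewrite v0 ?subn0 in r.
- by exists (copy v); [rewrite inE imset_f | rewrite label2_copy].
- exists (mirror v); first by rewrite inE imset_f ?orbT.
  by rewrite label2_mirror // r subnn.
Qed.

Lemma S2_dominates u :
  exists2 y, y \in S2 & dominates (cycle_rel (2 * n)) y (label2 y) u.
Proof.
have [_ _ domS] := eidsS.
case hu: (odd u).
- have [v vS /(dominates_active vS) [va vx]] := domS (partner (ord_mod u)).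
  have lam_le : lam v <= n by have [_] := activeP va; lia.
  exists (mirror v); first by rewrite inE imset_f ?orbT.
  rewrite label2_mirror //; apply: dominates_crt_lift; first exact: leq_subr.
    rewrite oddB ?copy_label_le // n_odd copy_label_odd // hu.
    by case: (lift_parity v).
  have pv : v + partner v = s %[mod n] by rewrite addnC partner_sum.
  apply: pm_shift_compl_or (pm_shift_reflect pv (partner_sum _) vx) => //.
  by case: (copy_label_cases v) => ->; lia.
- have [v vS /(dominates_active vS) [va vx]] := domS (ord_mod u).
  have lam_le : lam v <= n by have [_] := activeP va; lia.
  exists (copy v); first by rewrite inE imset_f.
  rewrite label2_copy //; apply: dominates_crt_lift; first exact: copy_label_le.
    by rewrite copy_label_odd // hu addbb.
  exact: pm_shift_compl_or (copy_label_cases v) vx.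
Qed.

Lemma eids_double : ext_irr_dom (cycle_rel (2 * n)) S2 label2.
Proof.
by split; [exact: label2_inj | exact: S2_label0 | exact: S2_dominates].
Qed.

End Mirror.

End Doubling.

Theorem proposition4p8 (n : nat) :
  odd n -> 3 <= n ->
  admits_optimal_eids (cycle_rel n) -> admits_optimal_eids (cycle_rel (2 * n)).
Proof.
move=> n_odd n_ge3 [S [lam [eidsS _]]].
have [s s_not_double] := exists_non_double n_odd eidsS n_ge3.
exact: admits_optimal_eids_of (eids_double n_odd eidsS s_not_double).
Qed.
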